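(* Let $X$ be a polyhedral normed space and $f: X\to X$ nonexpansive and real analytic. Let $\mathcal{M}(f)$ be the union of all minimal locked subsets of $B_{X^*}$ for $f$. If $x,y\in\operatorname{Fix}(f)$ satisfy $\phi(x)=\phi(y)$ for all $\phi\in\mathcal{M}(f)$, then $x=y$.
   Context: A polyhedral normed space is a finite-dimensional real normed space whose closed unit ball has finitely many extreme points; $B_{X^*}$ is the closed unit ball of the dual space. Nonexpansive: $\|f(x)-f(y)\|\le\|x-y\|$ for all $x,y$. Real analytic: locally given by a convergent power series. $\operatorname{Fix}(f)$ is the fixed point set of $f$. The duality map is $J(x)=\{\phi\in B_{X^*}: \phi(x)=\|x\|\}$. For $E\subseteq B_{X^*}$: $S_E(f)=\{x\in X: \phi(f(x))=\phi(x)\text{ for all }\phi\in E\}$. A set $E\subseteq B_{X^*}$ is locked (for $f$) if there exist $v,w\in S_E(f)$ with $J(v-w)=E$; a locked set is minimal if no proper subset of it is locked. *)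

From HB Require Import structures.
From mathcomp Require Import all_boot all_order all_algebra.
From mathcomp Require Import all_classical all_reals topology normedtype sequences.
Set Implicit Arguments. Unset Strict Implicit. Unset Printing Implicit Defensive.
Import Order.TTheory GRing.Theory Num.Theory numFieldNormedType.Exports.
Local Open Scope ring_scope.
Local Open Scope classical_set_scope.

(* A finite-dimensional real normed space is modelled as R^n = 'rV[R]_n
   equipped with an arbitrary norm N. *)
Definition is_norm (R : realType) (n : nat) (N : 'rV[R]_n -> R) : Prop :=
  [/\ forall x, N x = 0 -> x = 0,
      forall (a : R) x, N (a *: x) = `|a| * N x
    & forall x y, N (x + y) <= N x + N y].

Definition unit_ball (R : realType) (n : nat) (N : 'rV[R]_n -> R) : set 'rV[R]_n :=
  [set x | N x <= 1].

Definition extreme_point (R : realType) (n : nat) (C : set 'rV[R]_n) (x : 'rV[R]_n) : Prop :=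
  C x /\ forall (y z : 'rV[R]_n) (t : R), C y -> C z -> 0 < t < 1 ->
    x = t *: y + (1 - t) *: z -> y = x /\ z = x.

Definition polyhedral (R : realType) (n : nat) (N : 'rV[R]_n -> R) : Prop :=
  is_norm N /\ finite_set (extreme_point (unit_ball N)).

(* real-linear functionals X -> R (the dual space X^* ; finite dimension) *)
Definition lin_functional (R : realType) (n : nat) (phi : 'rV[R]_n -> R) : Prop :=
  (forall x y, phi (x + y) = phi x + phi y) /\ (forall (a : R) x, phi (a *: x) = a * phi x).

Definition dual_ball (R : realType) (n : nat) (N : 'rV[R]_n -> R) : set ('rV[R]_n -> R) :=
  [set phi | lin_functional phi /\ forall x, N x <= 1 -> `|phi x| <= 1].

Definition duality_map (R : realType) (n : nat) (N : 'rV[R]_n -> R) (x : 'rV[R]_n)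
  : set ('rV[R]_n -> R) :=
  [set phi | dual_ball N phi /\ phi x = N x].

Definition nonexpansive (R : realType) (n : nat) (N : 'rV[R]_n -> R)
  (f : 'rV[R]_n -> 'rV[R]_n) : Prop :=
  forall x y, N (f x - f y) <= N (x - y).

Definition Fix (R : realType) (n : nat) (f : 'rV[R]_n -> 'rV[R]_n) : set 'rV[R]_n :=
  [set x | f x = x].

Definition S_set (R : realType) (n : nat) (f : 'rV[R]_n -> 'rV[R]_n)
  (E : set ('rV[R]_n -> R)) : set 'rV[R]_n :=
  [set x | forall phi, E phi -> phi (f x) = phi x].

Definition locked (R : realType) (n : nat) (N : 'rV[R]_n -> R)
  (f : 'rV[R]_n -> 'rV[R]_n) (E : set ('rV[R]_n -> R)) : Prop :=
  E `<=` dual_ball N /\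
  exists v w, S_set f E v /\ S_set f E w /\ duality_map N (v - w) = E.

Definition minimal_locked (R : realType) (n : nat) (N : 'rV[R]_n -> R)
  (f : 'rV[R]_n -> 'rV[R]_n) (E : set ('rV[R]_n -> R)) : Prop :=
  locked N f E /\ forall E', E' `<` E -> ~ locked N f E'.

Definition M_set (R : realType) (n : nat) (N : 'rV[R]_n -> R)
  (f : 'rV[R]_n -> 'rV[R]_n) : set ('rV[R]_n -> R) :=
  [set phi | exists E, minimal_locked N f E /\ E phi].

(* Real analyticity on R^n (independent of the chosen norm).
   Multi-indices are functions 'I_n -> nat; monomial (x - a)^alpha. *)
Definition monomial (R : realType) (n : nat) (x a : 'rV[R]_n) (alpha : 'I_n -> nat) : R :=
  \prod_(i < n) (x ord0 i - a ord0 i) ^+ alpha i.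

Definition psum (R : realType) (n : nat) (c : ('I_n -> nat) -> R) (a x : 'rV[R]_n)
  (K : nat) : R :=
  \sum_(al : {ffun 'I_n -> 'I_K.+1}) c (fun i => nat_of_ord (al i)) * monomial x a (fun i => nat_of_ord (al i)).

Definition abs_psum (R : realType) (n : nat) (c : ('I_n -> nat) -> R) (a x : 'rV[R]_n)
  (K : nat) : R :=
  \sum_(al : {ffun 'I_n -> 'I_K.+1})
     `|c (fun i => nat_of_ord (al i))| * `|monomial x a (fun i => nat_of_ord (al i))|.

Definition real_analytic_scalar (R : realType) (n : nat) (g : 'rV[R]_n -> R) : Prop :=
  forall a : 'rV[R]_n, exists r : R, 0 < r /\ exists c : ('I_n -> nat) -> R,
    forall x : 'rV[R]_n, (forall i, `|x ord0 i - a ord0 i| < r) ->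
      (exists M : R, forall K, abs_psum c a x K <= M) /\
      (psum c a x K @[K --> \oo] --> g x).

Definition real_analytic (R : realType) (n : nat) (f : 'rV[R]_n -> 'rV[R]_n) : Prop :=
  forall j : 'I_n, real_analytic_scalar (fun x => f x ord0 j).

From Pilot Require Import Defs.
From mathcomp Require Import all_boot all_order all_algebra.
From mathcomp Require Import all_classical all_reals topology normedtype sequences.
From mathcomp Require Import lra zify.
Set Implicit Arguments. Unset Strict Implicit. Unset Printing Implicit Defensive.
Import Order.TTheory GRing.Theory Num.Theory.
Local Open Scope ring_scope.
Local Open Scope classical_set_scope.

(* If [x <> y] are fixed points then [J(x - y)] is locked, witnessed by [x]
   and [y] themselves.  Every locked set [E] avoiding the zero functional is a
   duality set [J(z)] with [z <> 0], and if [J(z') ⊊ J(z)] then the span of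
   [J(z)] is strictly larger than that of [J(z')]: a functional of [J(z)]
   spanned by [J(z')] is an affine combination of elements of [J(z')], so it
   also attains [N z'] at [z'].  Hence descending through locked subsets of
   [J(x - y)] terminates, after at most [n + 1] steps, at a minimal locked set
   [E ⊆ J(x - y)].  Any [phi] in [E] (nonempty by Hahn-Banach) lies in [M(f)]
   and satisfies [phi (x - y) = N (x - y) <> 0]. *)

Section Norm.
Variables (R : realType) (n : nat) (N : 'rV[R]_n -> R).
Hypothesis normN : is_norm N.

Lemma is_norm0 : N 0 = 0.
Proof. by case: normN => _ hZ _; rewrite -(scale0r 0) hZ normr0 mul0r. Qed.

Lemma is_normN x : N (- x) = N x.
Proof. by case: normN => _ hZ _; rewrite -scaleN1r hZ normrN normr1 mul1r. Qed.

Lemma is_norm_ge0 x : 0 <= N x.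
Proof.
case: normN => _ _ hT; have := hT x (- x).
rewrite subrr is_norm0 is_normN; lra.
Qed.

Lemma is_norm_eq0 x : (N x == 0) = (x == 0).
Proof.
apply/eqP/eqP => [|->]; last exact: is_norm0.
by case: normN => hN0 _ _; apply: hN0.
Qed.

Lemma duality_map_cst0 z : duality_map N z (fun=> 0) <-> N z = 0.
Proof.
split=> [[_ <-] //|Nz0]; split=> //; split.
  by split=> *; rewrite ?addr0 ?mulr0.
by move=> *; rewrite normr0.
Qed.

End Norm.

Section LinearForms.
Variables (R : realType) (n : nat).

Definition cvform (g : 'cV[R]_n) (x : 'rV[R]_n) : R := (x *m g) 0 0.

Lemma cvformDr g x y : cvform g (x + y) = cvform g x + cvform g y.
Proof. by rewrite /cvform mulmxDl mxE. Qed.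

Lemma cvformZr g a x : cvform g (a *: x) = a * cvform g x.
Proof. by rewrite /cvform -scalemxAl mxE. Qed.

Lemma cvformNr g x : cvform g (- x) = - cvform g x.
Proof. by rewrite -scaleN1r cvformZr mulN1r. Qed.

Lemma cvformDl g h x : cvform (g + h) x = cvform g x + cvform h x.
Proof. by rewrite /cvform mulmxDr mxE. Qed.

Lemma cvformZl a g x : cvform (a *: g) x = a * cvform g x.
Proof. by rewrite /cvform -scalemxAr mxE. Qed.

Lemma cvform_lin g : lin_functional (cvform g).
Proof. by split=> *; [exact: cvformDr | exact: cvformZr]. Qed.

Lemma cvform_kernel (m : nat) (W : 'M[R]_(m, n)) g x :
  W *m g = 0 -> (x <= W)%MS -> cvform g x = 0.
Proof. by move=> Wg0 /submxP [D ->]; rewrite /cvform -mulmxA Wg0 mulmx0 mxE. Qed.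

(* A column of [cokermx W] not killed by [u] gives the separating form. *)
Lemma exists_cvform_sep (m : nat) (W : 'M[R]_(m, n)) (u : 'rV[R]_n) :
  ~~ (u <= W)%MS -> exists h, W *m h = 0 /\ cvform h u = 1.
Proof.
rewrite submxE; have := mulmx_coker W; move: (cokermx W) => C WC0 /eqP uC_neq0.
have [j uCj] : exists j, (u *m C) 0 j != 0.
  apply: contrapT => Hall; apply: uC_neq0; apply/rowP => j; rewrite [RHS]mxE.
  by apply/eqP/negPn/negP => uCj; apply: Hall; exists j.
exists (((u *m C) 0 j)^-1 *: col j C); split.
  by rewrite -scalemxAr colE mulmxA WC0 mul0mx scaler0.
by rewrite cvformZl /cvform colE mulmxA -colE [col _ _ _ _]mxE mulVf.
Qed.

End LinearForms.

Section HahnBanach.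
Variables (R : realType) (n : nat) (N : 'rV[R]_n -> R).
Hypothesis normN : is_norm N.

Definition dominated_on (m : nat) (W : 'M[R]_(m, n)) (g : 'cV[R]_n) :=
  forall x, (x <= W)%MS -> cvform g x <= N x.

(* The one-step extension of Hahn-Banach: the new value at [u] is a supremum
   of [cvform g w - N (w - u)] over [w] in [W]. *)
Lemma dominated_extend1 (m : nat) (W : 'M[R]_(m, n)) g (u : 'rV[R]_n) :
  ~~ (u <= W)%MS -> dominated_on W g ->
  exists g', (forall x, (x <= W)%MS -> cvform g' x = cvform g x) /\
             dominated_on (W + u)%MS g'.
Proof.
move=> uW gW; case: (normN) => _ hZ hT.
have [h [Wh0 hu1]] := exists_cvform_sep uW.
have key w w' : (w <= W)%MS -> (w' <= W)%MS ->
    cvform g w - N (w - u) <= N (w' + u) - cvform g w'.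
  move=> hw hw'; have := gW _ (addmx_sub hw hw'); rewrite cvformDr.
  have := hT (w - u) (w' + u); rewrite addrACA addNr addr0; lra.
pose S := [set cvform g w - N (w - u) | w in [set w | (w <= W)%MS]].
have S0 : S (cvform g 0 - N (0 - u)) by exists 0 => //; exact: sub0mx.
have supS : has_sup S.
  split; first by exists (cvform g 0 - N (0 - u)).
  by exists (N (0 + u) - cvform g 0) => _ [w hw <-]; apply: key; rewrite ?sub0mx.
have ub w : (w <= W)%MS -> cvform g w - N (w - u) <= sup S.
  by move=> hw; apply: sup_upper_bound => //; exists w.
have lb w : (w <= W)%MS -> sup S <= N (w + u) - cvform g w.
  move=> hw; apply: ge_sup; first by exists (cvform g 0 - N (0 - u)).
  by move=> _ [w' hw' <-]; apply: key.
exists (g + (sup S - cvform g u) *: h); split.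
  by move=> x hx; rewrite cvformDl cvformZl (cvform_kernel Wh0 hx) mulr0 addr0.
move=> x /sub_addsmxP [[y1 y2] ->] /=.
have := submxMl y1 W; move: (y1 *m W) => w hw.
rewrite [y2]mx11_scalar mul_scalar_mx; move: (y2 0 0) => t.
rewrite cvformDl cvformZl !cvformDr !cvformZr (cvform_kernel Wh0 hw) hu1.
case: (ltrgtP t 0) => ht.
- have e : w + t *: u = (- t) *: ((- t)^-1 *: w - u).
    by rewrite scalerBr scalerA mulfV ?oppr_eq0 ?lt_eqF // scale1r scaleNr opprK.
  have nt : 0 < - t by rewrite oppr_gt0.
  have := ub _ (scalemx_sub (- t)^-1 hw); rewrite cvformZr e hZ gtr0_norm //.
  move=> /(ler_wpM2l (ltW nt)).
  by rewrite mulrBr mulrA mulfV ?oppr_eq0 ?lt_eqF // mul1r; lra.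
- have e : w + t *: u = t *: (t^-1 *: w + u).
    by rewrite scalerDr scalerA mulfV ?gt_eqF // scale1r.
  have := lb _ (scalemx_sub t^-1 hw); rewrite cvformZr e hZ gtr0_norm //.
  move=> /(ler_wpM2l (ltW ht)).
  by rewrite mulrBr mulrA mulfV ?gt_eqF // mul1r; lra.
- by rewrite ht scale0r addr0; have := gW w hw; lra.
Qed.

Lemma dominated_extend (m : nat) (W : 'M[R]_(m, n)) g :
  dominated_on W g ->
  exists g', (forall x, (x <= W)%MS -> cvform g' x = cvform g x) /\
             forall x, cvform g' x <= N x.
Proof.
move=> gW; have [k rankW] := ubnP (n - \rank W).
elim: k m W g rankW gW => // k IH m W g rankW gW.
have [Wfull|Wnfull] := boolP (row_full W).
  by exists g; split=> // x; apply: gW; exact: submx_full.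
have [i eiW] : exists i, ~~ (row i (1%:M : 'M[R]_n) <= W)%MS.
  by apply/row_subPn; rewrite sub1mx.
have [g1 [g1W g1dom]] := dominated_extend1 eiW gW.
have rank_lt : (\rank W < \rank (W + row i 1%:M)%MS)%N.
  by apply: rank_ltmx; rewrite ltmxE addsmxSl addsmx_sub submx_refl.
have [|g' [g'W g'dom]] := IH _ _ _ _ g1dom.
  have := rank_leq_col (W + row i 1%:M)%MS; move: rank_lt rankW.
  by set r := \rank (W + _)%MS; set r0 := \rank W; lia.
exists g'; split=> // x hx.
by rewrite g'W ?g1W //; apply: submx_trans hx (addsmxSl _ _).
Qed.

Lemma exists_norming_cvform z :
  exists g, cvform g z = N z /\ forall x, cvform g x <= N x.
Proof.
have [g [gz gdom]] : exists g, cvform g z = N z /\ dominated_on z g.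
  have [-> | z_neq0] := eqVneq z 0.
    exists 0; rewrite /cvform mulmx0 mxE is_norm0 //; split=> // x _.
    by rewrite /cvform mulmx0 mxE; exact: is_norm_ge0.
  have z_notin0 : ~~ (z <= (0 : 'M[R]_n))%MS by rewrite submx0.
  have [h [_ hz1]] := exists_cvform_sep z_notin0.
  exists (N z *: h); rewrite cvformZl hz1 mulr1; split=> // x /sub_rVP [a ->].
  case: (normN) => _ hZ _.
  rewrite cvformZr cvformZl hz1 mulr1 hZ.
  by apply: ler_wpM2r; [exact: is_norm_ge0 | exact: ler_norm].
have [g' [g'z g'dom]] := dominated_extend gdom.
by exists g'; rewrite g'z ?submx_refl.
Qed.

Lemma duality_map_nonempty z : exists phi, duality_map N z phi.
Proof.
have [g [gz gdom]] := exists_norming_cvform z.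
exists (cvform g); split=> //; split; first exact: cvform_lin.
move=> x Nx1; rewrite ler_norml; apply/andP; split; last exact: le_trans (gdom x) Nx1.
by rewrite lerNl -cvformNr; apply: le_trans (gdom _) _; rewrite is_normN.
Qed.

End HahnBanach.

Section Coordinates.
Variables (R : realType) (n : nat).
Implicit Types (phi psi : 'rV[R]_n -> R) (E : set ('rV[R]_n -> R)).

Lemma lin_functionalB phi x y : lin_functional phi -> phi (x - y) = phi x - phi y.
Proof. by case=> hD hZ; rewrite -scaleN1r hD hZ mulN1r. Qed.

Definition coordv phi : 'rV[R]_n := \row_j phi (delta_mx 0 j).

Lemma lin_functional_coordv phi x :
  lin_functional phi -> phi x = \sum_j x 0 j * coordv phi 0 j.
Proof.
case=> hD hZ; have phi0 : phi 0 = 0 by rewrite -(scale0r 0) hZ mul0r.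
rewrite {1}(row_sum_delta x) (big_morph phi hD phi0).
by apply: eq_bigr => j _; rewrite hZ mxE.
Qed.

Definition indep_functionals E (k : nat) :=
  exists A : 'M[R]_(k, n), row_free A /\ forall i, exists2 phi, E phi & row i A = coordv phi.

Lemma indep_functionals0 E : indep_functionals E 0.
Proof. by exists 0; split=> [|[]//]; rewrite /row_free mxrank0. Qed.

Lemma indep_functionals_le E k : indep_functionals E k -> (k <= n)%N.
Proof. by case=> A [/eqP rankA _]; rewrite -rankA; exact: rank_leq_col. Qed.

Lemma row_free_col_mx (k : nat) (A : 'M[R]_(k, n)) (v : 'rV[R]_n) :
  row_free A -> ~~ (v <= A)%MS -> row_free (col_mx A v).
Proof.
rewrite /row_free -addsmxE => /eqP rankA vA.
have : (\rank A < \rank (A + v)%MS)%N.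
  by apply: rank_ltmx; rewrite ltmxE addsmxSl addsmx_sub submx_refl.
have := rank_leq_row (col_mx A v); rewrite -addsmxE.
set r := \rank (A + v)%MS; rewrite rankA => ? ?; apply/eqP; lia.
Qed.

Lemma coordv_submx_comb (k : nat) (A : 'M[R]_(k, n)) (F : 'I_k -> 'rV[R]_n -> R)
    (D : 'rV[R]_k) psi :
  lin_functional psi -> (forall i, lin_functional (F i)) ->
  (forall i, row i A = coordv (F i)) -> coordv psi = D *m A ->
  forall x, psi x = \sum_i D 0 i * F i x.
Proof.
move=> psi_lin F_lin AF psiDA x.
rewrite lin_functional_coordv // psiDA.
under eq_bigr do rewrite mxE mulr_sumr.
rewrite exchange_big; apply: eq_bigr => i _.
rewrite lin_functional_coordv // mulr_sumr; apply: eq_bigr => j _.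
by rewrite -AF mxE mulrCA.
Qed.

Section DualityMap.
Variable N : 'rV[R]_n -> R.

(* Evaluating at [z1] shows that the coefficients sum to [1]. *)
Lemma duality_map_comb (k : nat) z1 z2 (F : 'I_k -> 'rV[R]_n -> R) (c : 'I_k -> R) psi :
  N z1 != 0 -> duality_map N z2 `<=` duality_map N z1 ->
  (forall i, duality_map N z2 (F i)) -> duality_map N z1 psi ->
  (forall x, psi x = \sum_i c i * F i x) -> duality_map N z2 psi.
Proof.
move=> Nz1 J21 FJ [psi_ball psiz1] psiE; split=> //.
have sum_c : \sum_i c i = 1.
  have : (\sum_i c i) * N z1 = 1 * N z1.
    rewrite mul1r -{2}psiz1 psiE mulr_suml; apply: eq_bigr => i _.
    by rewrite (J21 _ (FJ i)).2.
  by move/(mulIf Nz1).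
by rewrite psiE -[RHS]mul1r -sum_c mulr_suml; apply: eq_bigr => i _; rewrite (FJ i).2.
Qed.

Lemma indep_functionals_proper z1 z2 k :
  N z1 != 0 -> duality_map N z2 `<` duality_map N z1 ->
  indep_functionals (duality_map N z2) k -> indep_functionals (duality_map N z1) (k + 1).
Proof.
move=> Nz1 [J21 J12] [A [Afree AJ]].
have [psi psiJ1 psiJ2] : exists2 psi, duality_map N z1 psi & ~ duality_map N z2 psi.
  apply: contrapT => Hno; apply: J12 => psi psiJ1; apply: contrapT => psiJ2.
  by apply: Hno; exists psi.
have /choice [F FP] : forall i, exists phi, duality_map N z2 phi /\ row i A = coordv phi.
  by move=> i; have [phi ? ?] := AJ i; exists phi.
have FJ i := (FP i).1; have AF i := (FP i).2.
have psiA : ~~ (coordv psi <= A)%MS.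
  apply/negP => /submxP [D psiDA]; apply: psiJ2.
  apply: (duality_map_comb Nz1 J21 FJ psiJ1).
  exact: coordv_submx_comb psiJ1.1.1 (fun i => (FJ i).1.1) AF psiDA.
exists (col_mx A (coordv psi)); split; first exact: row_free_col_mx.
move=> i; rewrite -(splitK i); case: (fintype.split i) => j /=.
  by rewrite rowKu; exists (F j); [exact: J21 | exact: AF].
by rewrite rowKd row_id; exists psi.
Qed.

End DualityMap.
End Coordinates.

Section MinimalLocked.
Variables (R : realType) (n : nat) (N : 'rV[R]_n -> R) (f : 'rV[R]_n -> 'rV[R]_n).

Lemma locked_duality_map E :
  Defs.locked N f E -> ~ E (fun=> 0) -> exists2 z, E = duality_map N z & N z != 0.
Proof.
case=> _ [v [w [_ [_ EJ]]]] E0; exists (v - w) => //.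
by apply/eqP => /duality_map_cst0; rewrite EJ.
Qed.

(* Each proper step down increases the number of independent functionals,
   which is bounded by [n]. *)
Lemma minimal_locked_sub E :
  Defs.locked N f E -> ~ E (fun=> 0) -> exists2 Em, minimal_locked N f Em & Em `<=` E.
Proof.
move=> Elock E0; suff /(_ n.+1 E Elock E0) : forall k E,
    Defs.locked N f E -> ~ E (fun=> 0) -> ~ indep_functionals E k ->
    exists2 Em, minimal_locked N f Em & Em `<=` E.
  by apply=> // /indep_functionals_le; rewrite ltnn.
elim=> [|k IH] {}E {}Elock {}E0 Enindep; first by case: Enindep; exact: indep_functionals0.
have [Emin|Enmin] := pselect (minimal_locked N f E); first by exists E.
have [E' E'E E'lock] : exists2 E', E' `<` E & Defs.locked N f E'.
  apply: contrapT => Hno; apply: Enmin; split=> // E' E'E E'lock.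
  by apply: Hno; exists E'.
have E'0 : ~ E' (fun=> 0) by move=> /E'E.1.
have [Em Emmin EmE'] : exists2 Em, minimal_locked N f Em & Em `<=` E'.
  apply: IH => // E'indep; apply: Enindep.
  have [z1 EJ Nz1] := locked_duality_map Elock E0.
  have [z2 E'J _] := locked_duality_map E'lock E'0.
  rewrite EJ E'J in E'E E'indep *; rewrite -addn1.
  exact: indep_functionals_proper Nz1 E'E E'indep.
by exists Em => //; apply: subset_trans EmE' E'E.1.
Qed.

End MinimalLocked.

Theorem lemma2p6 (R : realType) (n : nat) (N : 'rV[R]_n -> R)
  (f : 'rV[R]_n -> 'rV[R]_n) :
  polyhedral N -> nonexpansive N f -> real_analytic f ->
  forall x y : 'rV[R]_n, Fix f x -> Fix f y ->
  (forall phi, M_set N f phi -> phi x = phi y) -> x = y.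
Proof.
move=> [normN _] _ _ x y fx fy Mxy; apply: contrapT => /eqP x_neq_y.
have Nxy : N (x - y) != 0 by rewrite is_norm_eq0 // subr_eq0.
have Elock : Defs.locked N f (duality_map N (x - y)).
  split=> [phi [] //|]; exists x, y.
  by split; [|split] => // phi _; rewrite ?fx ?fy.
have E0 : ~ duality_map N (x - y) (fun=> 0).
  by move/duality_map_cst0/eqP; rewrite (negbTE Nxy).
have [Em Emmin EmE] := minimal_locked_sub Elock E0.
have [phi Emphi] : exists phi, Em phi.
  by case: Emmin => [[_ [v [w [_ [_ <-]]]]] _]; exact: duality_map_nonempty.
have [[phi_lin _] phixy] := EmE _ Emphi.
move: Nxy; rewrite -phixy lin_functionalB // Mxy ?subrr ?eqxx //.
by exists Em.
Qed.
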